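(* There is an absolute constant $c$ such that for every graph $G$ with $V(G)=[n]$ and every $k\ge1$, with $H=G^k$ and $(P,N)=R[H]$ as defined below, there is a CNF formula consistent with $(P,N)$ with at most $\chi(G)^k n^{c}$ clauses.
   Context: $G^k$ is the $k$-fold lexicographic product; its vertices are tuples $\vec u=(u_1,\dots,u_k)\in V(G)^k$, and $\vec u\vec v\in E(G^k)$ iff there is $i$ with $u_j=v_j$ for $j<i$ and $u_iv_i\in E(G)$. For $u\in[n]$ let $\mathrm{enc}(u)=0^{u-1}10^{n-u}\in\{0,1\}^n$, and for an edge $uv$ let $\mathrm{enc}(uv)\in\{0,1\}^n$ have 1s exactly at positions $u$ and $v$. Samples lie in $\{0,1\}^{nk}$ (variables $z(i,u)$, $i\in[k]$, $u\in[n]$, in $k$ blocks). Negative samples: $N=\{\mathrm{enc}(u_1)\cdots\mathrm{enc}(u_k):\vec u\in V(H)\}$. Positive samples: $P=\{\mathrm{enc}(u_1)\cdots\mathrm{enc}(u_{i-1})\,\mathrm{enc}(u_iv)\,\mathrm{enc}(u_{i+1})\cdots\mathrm{enc}(u_k):\vec u\in V(H),\ i\in[k],\ u_iv\in E(G)\}$. A formula is consistent if it is true on all of $P$ and false on all of $N$. $\chi$ is the chromatic number. *)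

From mathcomp Require Import all_boot.
Set Implicit Arguments. Unset Strict Implicit. Unset Printing Implicit Defensive.

(* A graph on vertex set [n] is represented by 'I_n (vertex u in [n] is the
   ordinal u-1) with a symmetric irreflexive adjacency relation G : rel 'I_n. *)
Definition simple_graph n (G : rel 'I_n) : Prop :=
  symmetric G /\ irreflexive G.

Definition lexprod_edge n k (G : rel 'I_n) (u v : 'I_k -> 'I_n) : Prop :=
  exists i : 'I_k, (forall j : 'I_k, j < i -> u j = v j) /\ G (u i) (v i).

(* Proper m-colouring (edges between distinct vertices get distinct colours;
   for a loopless graph this is the usual notion). *)
Definition colorable n (G : rel 'I_n) (m : nat) : bool :=
  [exists f : {ffun 'I_n -> 'I_m},
     [forall u, forall v, (u != v) ==> G u v ==> (f u != f v)]].

Lemma colorable_ex n (G : rel 'I_n) : exists m, colorable G m.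
Proof.
exists n; apply/existsP; exists [ffun u => u].
apply/forallP=> u; apply/forallP=> v; rewrite !ffunE.
by apply/implyP=> H; apply/implyP.
Qed.

Definition chi n (G : rel 'I_n) : nat := ex_minn (colorable_ex G).

(* Samples: assignments to the variables z(i,u), i in [k], u in [n]. *)
Definition sample k n := ('I_k * 'I_n)%type -> bool.

Definition literal k n := (('I_k * 'I_n) * bool)%type.
Definition clause k n := seq (literal k n).
Definition cnf k n := seq (clause k n).

Definition eval_lit k n (a : sample k n) (l : literal k n) : bool := a l.1 == l.2.
Definition eval_clause k n (a : sample k n) (C : clause k n) : bool :=
  has (eval_lit a) C.
Definition eval_cnf k n (a : sample k n) (F : cnf k n) : bool :=
  all (eval_clause a) F.

(* Negative sample enc(u_1)...enc(u_k) for a vertex u of H = G^k. *)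
Definition neg_sample k n (u : 'I_k -> 'I_n) : sample k n :=
  fun p => u p.1 == p.2.

(* Positive sample: block i replaced by enc(u_i v). *)
Definition pos_sample k n (u : 'I_k -> 'I_n) (i : 'I_k) (v : 'I_n) : sample k n :=
  fun p => if p.1 == i then (p.2 == u i) || (p.2 == v) else u p.1 == p.2.

Definition is_neg k n (a : sample k n) : Prop :=
  exists u : 'I_k -> 'I_n, a =1 neg_sample u.

Definition is_pos k n (G : rel 'I_n) (a : sample k n) : Prop :=
  exists (u : 'I_k -> 'I_n) (i : 'I_k) (v : 'I_n),
    G (u i) v /\ a =1 pos_sample u i v.

Definition consistent k n (G : rel 'I_n) (F : cnf k n) : Prop :=
  (forall a, is_pos G a -> eval_cnf a F) /\
  (forall a, is_neg a -> ~~ eval_cnf a F).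

From mathcomp Require Import all_boot.

(* Fix a proper colouring [f] of [G] with [chi G] colours. For each colour
   vector [c] take the clause "some chosen vertex in some block [i] has a
   colour other than [c i]". A negative sample chooses one vertex per block
   and falsifies the clause of its own colour vector; a positive sample
   chooses two adjacent, hence differently coloured, vertices in one block,
   so it satisfies every clause. This gives [chi G ^ k] clauses, i.e. [c = 0]. *)

Lemma eq_eval_cnf {k n} (F : cnf k n) {a b : sample k n} :
  a =1 b -> eval_cnf a F = eval_cnf b F.
Proof.
move=> eq_ab; apply: eq_all => C; apply: eq_has => l.
by rewrite /eval_lit eq_ab.
Qed.

Section ColourCNF.
Context (k : nat) {n m : nat} (f : 'I_n -> 'I_m).

Definition colour_clause (c : {ffun 'I_k -> 'I_m}) : clause k n :=
  [seq (p, true) | p <- enum [pred p : 'I_k * 'I_n | f p.2 != c p.1]].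

Definition colour_cnf : cnf k n := map colour_clause (enum {ffun 'I_k -> 'I_m}).

Lemma size_colour_cnf : size colour_cnf = m ^ k.
Proof. by rewrite size_map -cardE card_ffun !card_ord. Qed.

Lemma eval_colour_clauseP (a : sample k n) (c : {ffun 'I_k -> 'I_m}) :
  reflect (exists p : 'I_k * 'I_n, f p.2 != c p.1 /\ a p)
          (eval_clause a (colour_clause c)).
Proof.
rewrite /eval_clause /colour_clause has_map.
apply: (iffP hasP) => [[p] | [p [fp_neq ap]]].
  by rewrite mem_enum inE /eval_lit /= => fp_neq /eqP ap; exists p.
by exists p; rewrite ?mem_enum ?inE // /eval_lit /= ap.
Qed.

Lemma colour_cnf_neg_sample (u : 'I_k -> 'I_n) :
  ~~ eval_cnf (neg_sample u) colour_cnf.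
Proof.
set c := [ffun i => f (u i)]; apply/allPn; exists (colour_clause c).
  exact: map_f (mem_enum _ c).
apply/eval_colour_clauseP => -[[i x] [/= fx_neq /eqP ux]].
by move: fx_neq; rewrite ffunE ux eqxx.
Qed.

Lemma colour_cnf_pos_sample (u : 'I_k -> 'I_n) (i : 'I_k) (v : 'I_n) :
  f (u i) != f v -> eval_cnf (pos_sample u i v) colour_cnf.
Proof.
move=> fuv_neq; apply/allP => _ /mapP [c _ ->]; apply/eval_colour_clauseP.
have [fu_eq | fu_neq] := eqVneq (f (u i)) (c i).
  by exists (i, v); rewrite /= -fu_eq eq_sym /pos_sample /= !eqxx orbT.
by exists (i, u i); rewrite /pos_sample /= !eqxx.
Qed.

Lemma colour_cnf_consistent (G : rel 'I_n) :
  irreflexive G -> (forall x y, x != y -> G x y -> f x != f y) ->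
  consistent G colour_cnf.
Proof.
move=> irrG properf; split=> a.
  move=> [u [i [v [Guv eq_a]]]]; rewrite (eq_eval_cnf _ eq_a).
  apply/colour_cnf_pos_sample/properf => //.
  by apply: contraTneq Guv => ->; rewrite irrG.
by move=> [u eq_a]; rewrite (eq_eval_cnf _ eq_a) colour_cnf_neg_sample.
Qed.

End ColourCNF.

Lemma chi_colouring {n} (G : rel 'I_n) :
  exists f : 'I_n -> 'I_(chi G), forall x y, x != y -> G x y -> f x != f y.
Proof.
rewrite /chi; case: ex_minnP => m /existsP [f /forallP properf] _.
exists f => x y xy_neq Gxy.
by move: (properf x) => /forallP /(_ y); rewrite xy_neq Gxy.
Qed.

Theorem mainTheorem17 :
  exists c : nat,
    forall (n : nat) (G : rel 'I_n), simple_graph G ->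
    forall k : nat, 1 <= k ->
    exists F : cnf k n,
      consistent G F /\ size F <= chi G ^ k * n ^ c.
Proof.
exists 0 => n G [_ irrG] k _.
have [f properf] := chi_colouring G.
exists (colour_cnf k f); split; first exact: colour_cnf_consistent irrG properf.
by rewrite size_colour_cnf expn0 muln1.
Qed.
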